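(* Let $N\ge1$, $\mathbf{M}=\mathrm{diag}(m_0,\dots,m_N)$ arbitrary real diagonal, $\mathbf{m}=(m_0,\dots,m_N)^\top$, and let $\mathbf{Q}_N$ be the tridiagonal matrix with $(\mathbf{Q}_N)_{kk}=-N$, $(\mathbf{Q}_N)_{k+1,k}=N-k$, $(\mathbf{Q}_N)_{k-1,k}=k$ (indices $0,\dots,N$) and zeros elsewhere. Let $\mathbf{C}$ be the $(N+1)\times(N+1)$ matrix with entries $c_{ik}$ defined by $\sum_{i=0}^N c_{ik}t^i=(1-t)^k(1+t)^{N-k}$ (so its columns are eigenvectors of $\mathbf{Q}_N$ and $\mathbf{C}^{-1}=2^{-N}\mathbf{C}$). For $\mu>0$ let $\mathbf{p}(\mu)\in S_{N+1}$ be the positive solution of $(\mathbf{M}+\mu\mathbf{Q}_N)\mathbf{p}=\overline{m}\,\mathbf{p}$ with $\overline{m}=\mathbf{m}\cdot\mathbf{p}$, and put $\mathbf{x}(\mu)=\mathbf{C}^{-1}\mathbf{p}(\mu)$. Let $\hat{\mathbf{x}}=2^{-N}(1,0,\dots,0)^\top$. Then for all $\mu>0$, $$\|\mathbf{x}(\mu)-\hat{\mathbf{x}}\|_1\le\frac{1}{\mu}\|\mathbf{M}\|_1,$$ and for all $\mu$ with $2\mu>(2^{N+1}+1)\|\mathbf{M}\|_1$, $$\|\mathbf{x}'(\mu)\|_1\le\frac{2N}{2\mu-(2^{N+1}+1)\|\mathbf{M}\|_1}.$$ In particular $\lim_{\mu\to\infty}\mathbf{x}(\mu)=\hat{\mathbf{x}}$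 and $\lim_{\mu\to\infty}\mathbf{x}'(\mu)=0$.
   Context: $S_{N+1}=\{\mathbf{p}\in\mathbb{R}^{N+1}:\mathbf{p}\ge0,\ \sum_i p_i=1\}$. $\mathbf{p}(\mu)$ is the normalized Perron eigenvector of $\mathbf{M}+\mu\mathbf{Q}_N$ for its dominant eigenvalue $\overline{m}(\mu)$. $\|\cdot\|_1$ is the $\ell^1$ norm on vectors and the induced operator norm on matrices (for diagonal $\mathbf{M}$, $\|\mathbf{M}\|_1=\max_k|m_k|$). Primes denote derivatives with respect to $\mu$. *)

From HB Require Import structures.
From mathcomp Require Import all_boot all_order all_algebra.
From mathcomp Require Import all_classical all_reals topology normedtype derive.
Set Implicit Arguments. Unset Strict Implicit. Unset Printing Implicit Defensive.
Import Order.TTheory GRing.Theory Num.Theory.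
Local Open Scope ring_scope.

Section Defs.
Variable R : realType.

Definition Qmat (N : nat) : 'M[R]_(N.+1) :=
  \matrix_(i, j) (if i == j then - (N%:R)
                  else if (i : nat) == j.+1 then (N - j)%:R
                  else if (i : nat).+1 == j then (j : nat)%:R
                  else 0).

Definition Cmat (N : nat) : 'M[R]_(N.+1) :=
  \matrix_(i, k) (((1 - 'X) ^+ k * (1 + 'X) ^+ (N - k) : {poly R})`_i).

Definition Mdiag (N : nat) (m : 'I_N.+1 -> R) : 'M[R]_(N.+1) :=
  diag_mx (\row_k m k).

Definition l1norm (n : nat) (v : 'cV[R]_n) : R := \sum_i `|v i 0|.

(* induced l^1 operator norm: maximal absolute column sum *)
Definition opnorm1 (n : nat) (A : 'M[R]_n) : R :=
  \big[Num.max/0]_j \sum_i `|A i j|.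

Definition xhat (N : nat) : 'cV[R]_(N.+1) :=
  \col_i (if (i : nat) == 0%N then (2%:R ^- N) else 0).

End Defs.

(* In the coordinates [x = C^-1 p], [Q_N] becomes diagonal: [Q_N C = C D] with
   [D = diag(0, -2, ..., -2N)], because the generating polynomials
   [(1 - t)^k (1 + t)^(N - k)] of the columns of [C] are eigenfunctions of the
   differential operator induced by [Q_N]; moreover [C^2 = 2^N], and the first
   coordinate [x_0 = 2^-N] is fixed by the normalization of [p].  The eigenvalue
   equation reads [mu D x = mbar x - C^-1 M C x].  Since [D] expands the
   l1-norm of vectors with vanishing first coordinate by at least [2], while
   [|C|_1 <= 2^N], [|C^-1|_1 <= 1] and [|mbar| <= |M|_1], this equation forces
   [|x - xhat|_1 <= |M|_1 / mu].  The same estimate, applied to the equations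
   satisfied by increments and difference quotients of [x], makes [x]
   Lipschitz and its difference quotients Cauchy, which gives [x'] and its
   bound. *)

From HB Require Import structures.
From mathcomp Require Import all_boot all_order all_algebra.
From mathcomp Require Import all_classical all_reals topology normedtype derive.
From mathcomp Require Import ring lra zify.
Set Implicit Arguments. Unset Strict Implicit. Unset Printing Implicit Defensive.
Import Order.TTheory GRing.Theory Num.Theory.
Local Open Scope ring_scope.

Section CoefL1.
Variable R : numDomainType.
Implicit Types (p : {poly R}) (n : nat).

Definition coef_l1 n p := \sum_(i < n) `|p`_i|.

Lemma coef_l1_1 n : coef_l1 n.+1 1 = 1.
Proof.
rewrite /coef_l1 big_ord_recl coef1 eqxx normr1 big1 ?addr0 // => i _.
by rewrite coef1 normr0.
Qed.

Lemma coef_l1_mulX n p : coef_l1 n (p * 'X) <= coef_l1 n p.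
Proof.
case: n => [|n]; first by rewrite /coef_l1 !big_ord0.
rewrite /coef_l1 big_ord_recl coefMX eqxx normr0 add0r big_ord_recr /=.
rewrite -[leLHS]addr0 lerD //; apply: ler_sum => i _.
by rewrite coefMX.
Qed.

Lemma coef_l1_mul_1addZX n p s : `|s| <= 1 ->
  coef_l1 n (p * (1 + s *: 'X)) <= 2 * coef_l1 n p.
Proof.
move=> s_le1; rewrite mulrDr mulr1 -scalerAr mulr2n mulrDl mul1r.
apply: (@le_trans _ _ (coef_l1 n p + coef_l1 n (p * 'X))); last first.
  by rewrite lerD // coef_l1_mulX.
rewrite /coef_l1 -big_split; apply: ler_sum => i _.
rewrite coefD coefZ (le_trans (ler_normD _ _)) //.
by rewrite lerD // normrM ler_piMl.
Qed.

Lemma coef_l1_mul_1addZX_exp n p s k : `|s| <= 1 ->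
  coef_l1 n (p * (1 + s *: 'X) ^+ k) <= 2 ^+ k * coef_l1 n p.
Proof.
move=> s_le1; elim: k => [|k IHk]; first by rewrite !expr0 mulr1 mul1r.
rewrite exprSr mulrA (le_trans (coef_l1_mul_1addZX _ _ s_le1)) //.
by rewrite exprSr (mulrC _ 2) -mulrA ler_wpM2l.
Qed.

End CoefL1.

Lemma size_1addZX (R : nzRingType) (s : R) : (size (1 + s *: 'X : {poly R})%R <= 2)%N.
Proof.
rewrite (leq_trans (size_polyD _ _)) // size_poly1 geq_max /=.
by rewrite (leq_trans (size_scale_leq _ _)) // size_polyX.
Qed.

Lemma size_exp_leq2 (R : nzRingType) (p : {poly R}) k :
  (size p <= 2)%N -> (size (p ^+ k)%R <= k.+1)%N.
Proof.
move=> sp; apply: leq_trans (size_poly_exp_leq _ _) _.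
by rewrite ltnS -[leqRHS]mul1n leq_mul //; case: (size p) sp => [|[|[]]].
Qed.

Lemma poly_nat_roots_eq0 (R : numDomainType) (p : {poly R}) n :
  (size p <= n)%N -> (forall i, (i < n)%N -> root p i%:R) -> p = 0.
Proof.
move=> sp p_root; apply/eqP/negPn/negP => p_neq0.
have := max_poly_roots p_neq0 (rs := [seq (i%:R : R) | i <- iota 0 n]).
rewrite size_map size_iota map_inj_uniq ?iota_uniq; last exact: mulrIn (oner_neq0 _).
have -> : all (root p) [seq (i%:R : R) | i <- iota 0 n].
  by apply/allP => x /mapP [i]; rewrite mem_iota add0n => /p_root ? ->.
by move=> /(_ isT isT); case: (size p) sp => [|k] /=; lia.
Qed.

Section Krawtchouk.
Variables (R : numFieldType) (N : nat).

Definition kraw k : {poly R} := (1 - 'X) ^+ k * (1 + 'X) ^+ (N - k).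

Lemma kraw_1addZX k : kraw k = (1 + (-1) *: 'X) ^+ k * (1 + 1 *: 'X) ^+ (N - k).
Proof. by rewrite scaleN1r scale1r. Qed.

Lemma size_kraw k : (k <= N)%N -> (size (kraw k) <= N.+1)%N.
Proof.
move=> le_kN; rewrite kraw_1addZX (leq_trans (size_polyMleq _ _)) //.
have := leq_add (size_exp_leq2 k (size_1addZX (-1 : R)))
                (size_exp_leq2 (N - k) (size_1addZX (1 : R))).
by rewrite addSn addnS subnKC //; case: (_ + _)%N.
Qed.

Lemma kraw_coef0 k : (kraw k)`_0 = 1.
Proof. by rewrite -horner_coef0 !hornerE subr0 !expr1n mulr1. Qed.

Lemma coef_l1_kraw n k : (k <= N)%N -> coef_l1 n (kraw k) <= 2 ^+ N.
Proof.
move=> le_kN; rewrite kraw_1addZX -[_ ^+ k]mul1r.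
have -> : 2 ^+ N = 2 ^+ (N - k) * 2 ^+ k :> R by rewrite -exprD subnK.
apply: le_trans (@coef_l1_mul_1addZX_exp _ n _ 1 _ _) _; first by rewrite normr1.
apply: ler_wpM2l; first exact: exprn_ge0.
apply: le_trans (@coef_l1_mul_1addZX_exp _ n _ (-1) _ _) _.
  by rewrite normrN normr1.
case: n => [|n]; last by rewrite coef_l1_1 mulr1.
by rewrite /coef_l1 big_ord0 mulr0 exprn_ge0.
Qed.

Lemma horner_kraw k t : (kraw k).[t] = (1 - t) ^+ k * (1 + t) ^+ (N - k).
Proof. by rewrite !hornerE. Qed.

Lemma horner_kraw_ratio k t : 1 + t != 0 -> (k <= N)%N ->
  (kraw k).[t] = (1 + t) ^+ N * ((1 - t) / (1 + t)) ^+ k.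
Proof.
move=> t1_neq0 le_kN; rewrite horner_kraw -(subnKC le_kN) exprD addKn expr_div_n.
by field; rewrite expf_neq0.
Qed.

(* At [t], the left-hand side is [(1 + t) ^+ N * (kraw j).[(1 - t) / (1 + t)] = 2 ^+ N * t ^+ j]. *)
Lemma kraw_inversion j : (j <= N)%N ->
  \sum_(k < N.+1) (kraw j)`_k *: kraw k = 2 ^+ N *: 'X^j.
Proof.
move=> le_jN; apply/eqP; rewrite -subr_eq0; apply/eqP.
apply: (@poly_nat_roots_eq0 _ _ N.+1.+1) => [|i _].
  rewrite (leq_trans (size_polyD _ _)) // geq_max size_polyN; apply/andP; split.
    rewrite (leq_trans (size_sum _ _ _)) //; apply/bigmax_leqP => k _.
    by rewrite (leq_trans (size_scale_leq _ _)) // ltnW // ltnS size_kraw // -ltnS.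
  by rewrite (leq_trans (size_scale_leq _ _)) // size_polyXn !ltnS ltnW.
have i1_neq0 : 1 + i%:R != 0 :> R by rewrite addrC natr1 pnatr_eq0.
rewrite /root !hornerE horner_sum.
under eq_bigr => k _ do rewrite hornerZ (horner_kraw_ratio i1_neq0 (ltnSE (ltn_ord k))) mulrCA.
rewrite -mulr_sumr -(horner_coef_wide _ (size_kraw le_jN)) horner_kraw.
rewrite -{1 3}(subnKC le_jN) !exprD subr_eq0; apply/eqP.
rewrite mulrACA -!exprMn mulrAC -exprMn.
by congr (_ ^+ _ * _ ^+ _); field.
Qed.

(* [Qmat] acting on coefficient vectors, as a differential operator on generating
   polynomials (see [Qmat_coef_sum]). *)
Definition Qop (f : {poly R}) : {poly R} :=
  - (N%:R) *: f + N%:R *: ('X * f) + f^`() - 'X * ('X * f^`()).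

Lemma coef_Qop f i : (Qop f)`_i =
  - (N%:R) * f`_i + (if i is i'.+1 then (N%:R - i'%:R) * f`_i' else 0)
  + i.+1%:R * f`_i.+1.
Proof.
rewrite /Qop !coefD coefN !coefZ !coefXM coef_deriv.
case: i => [|[|i]]; rewrite ?eqxx ?coef_deriv.
- rewrite mulr0 subr0 addr0 -[f`_1 *+ 1]mulr_natr; ring.
- rewrite (_ : (1 == 0)%N = false) // subr0 subr0 -[f`_2 *+ 2]mulr_natr.
  rewrite -[1%N.-1]/0%N; ring.
- rewrite (_ : (i.+2 == 0)%N = false) // (_ : (i.+2.-1 == 0)%N = false) //.
  rewrite -[i.+2.-1]/(i.+1) -[i.+2.-2.+1]/(i.+1).
  rewrite -[f`_i.+3 *+ _]mulr_natr -[f`_i.+1 *+ _]mulr_natr; ring.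
Qed.

Lemma mul_deriv_exp (p : {poly R}) n : p * (p^`() * p ^+ n.-1 *+ n) = p^`() * p ^+ n *+ n.
Proof.
case: n => [|n]; first by rewrite !mulr0n mulr0.
by rewrite exprS -!mulrnAr mulrCA.
Qed.

Lemma Qop_kraw k : (k <= N)%N -> Qop (kraw k) = - (2 * k)%:R *: kraw k.
Proof.
move=> le_kN.
(* [1 - 'X^2 = (1 - 'X) * (1 + 'X)] splits the derivative part along the two factors. *)
have E : (kraw k)^`() - 'X * ('X * (kraw k)^`()) =
  (1 + 'X) * (1 + 'X) ^+ (N - k) * ((1 - 'X) * ((1 - 'X) ^+ k)^`())
  + (1 - 'X) * (1 - 'X) ^+ k * ((1 + 'X) * ((1 + 'X) ^+ (N - k))^`()).
  rewrite /kraw derivM.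
  move: ((1 - 'X : {poly R}) ^+ k) ((1 + 'X : {poly R}) ^+ (N - k)) => a b.
  move: (a^`()) (b^`()) => da db; ring.
have d1 : (1 : {poly R})^`() = 0 by rewrite -polyC1 derivC.
rewrite /Qop -addrA E !deriv_exp !mul_deriv_exp derivB derivD derivX d1 sub0r add0r.
rewrite -[_ *+ k]mulr_natr -[_ *+ (N - k)]mulr_natr.
rewrite -!mul_polyC !polyCN !polyC_natr natrM natrB // /kraw.
move: ((1 - 'X : {poly R}) ^+ k) ((1 + 'X : {poly R}) ^+ (N - k)) => a b; ring.
Qed.

End Krawtchouk.

Lemma sum_ord_if_eq (V : nmodType) n (g : nat -> V) a :
  \sum_(j < n) (if a == j :> nat then g j else 0) = if (a < n)%N then g a else 0.
Proof.
elim: n => [|n IHn]; first by rewrite big_ord0.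
rewrite big_ord_recr /= IHn [in RHS]ltnS.
case: eqP => [->|ne_an]; first by rewrite ltnn add0r leqnn.
by rewrite addr0 [(a <= n)%N]leq_eqVlt (introF eqP ne_an).
Qed.

Lemma sum_ord_if_eqS (V : nmodType) n (g : nat -> V) a :
  \sum_(j < n) (if a == j.+1 then g j else 0) =
  if a is a'.+1 then (if (a' < n)%N then g a' else 0) else 0.
Proof.
case: a => [|a]; first by rewrite big1.
by under eq_bigr do rewrite eqSS; exact: sum_ord_if_eq.
Qed.

Section Cmatrix.
Variables (R : realType) (N : nat).
Local Notation C := (Cmat R N).
Local Notation kraw := (kraw R N).

Lemma Cmat_kraw i k : C i k = (kraw k)`_i.
Proof. by rewrite mxE. Qed.

Lemma Cmat_sqr : C *m C = (2 ^+ N)%:M.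
Proof.
apply/matrixP => i j; rewrite !mxE.
under eq_bigr => k _ do rewrite !mxE mulrC.
transitivity ((\sum_(k < N.+1) (kraw j)`_k *: kraw k)`_i).
  by rewrite coef_sum; apply: eq_bigr => k _; rewrite coefZ.
by rewrite kraw_inversion ?coefZ ?coefXn ?mulr_natr // -ltnS.
Qed.

Lemma Cmat_mulmx_scale : C *m (2 ^- N *: C) = 1%:M.
Proof.
by rewrite -scalemxAr Cmat_sqr scale_scalar_mx mulVf // expf_neq0 // pnatr_eq0.
Qed.

Lemma Cmat_unit : C \in unitmx.
Proof. by case: (mulmx1_unit Cmat_mulmx_scale). Qed.

Lemma invmx_Cmat : invmx C = 2 ^- N *: C.
Proof.
by rewrite -[RHS]mul1mx -(mulVmx Cmat_unit) -mulmxA Cmat_mulmx_scale mulmx1.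
Qed.

Lemma Qmat_coef_sum (f : {poly R}) (i : 'I_N.+1) : (size f <= N.+1)%N ->
  \sum_j Qmat R N i j * f`_j = (Qop N f)`_i.
Proof.
move=> size_f; rewrite coef_Qop.
have split_if (a b : nat) (X Y Z F : R) :
    (if a == b then X else if a == b.+1 then Y else if a.+1 == b then Z else 0) * F =
    (if a == b then X * F else 0) + (if a == b.+1 then Y * F else 0)
    + (if a.+1 == b then Z * F else 0).
  by do 3 case: eqP => ?; rewrite ?mul0r ?addr0 ?add0r //; lia.
under eq_bigr => j _ do rewrite mxE -val_eqE split_if.
rewrite !big_split /= (sum_ord_if_eq _ (fun j => - (N%:R) * f`_j)).
rewrite (sum_ord_if_eqS _ (fun j => (N - j)%:R * f`_j)).
rewrite (sum_ord_if_eq _ (fun j => j%:R * f`_j)) ltn_ord.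
congr (_ + _ + _).
  case: (nat_of_ord i) (ltn_ord i) => [|i'] // lt_iN.
  by rewrite ltnW // natrB // -ltnS ltnW.
by case: ltnP => // le_Ni; rewrite nth_default ?mulr0 // (leq_trans size_f).
Qed.

Definition Dmat : 'M[R]_N.+1 := diag_mx (\row_(k < N.+1) - (2 * k)%:R).

Lemma Qmat_Cmat : Qmat R N *m C = C *m Dmat.
Proof.
apply/matrixP => i k; rewrite mul_mx_diag !mxE.
under eq_bigr => j _ do rewrite Cmat_kraw.
have le_kN : (k <= N)%N by rewrite -ltnS.
by rewrite Qmat_coef_sum ?size_kraw // Qop_kraw // coefZ mulrC.
Qed.

End Cmatrix.

Section L1norm.
Variables (R : realType) (n : nat).
Implicit Types (u v : 'cV[R]_n) (A : 'M[R]_n).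

Lemma l1norm_ge0 v : 0 <= l1norm v.
Proof. exact: sumr_ge0. Qed.

Lemma l1normD u v : l1norm (u + v) <= l1norm u + l1norm v.
Proof. by rewrite -big_split; apply: ler_sum => i _; rewrite mxE ler_normD. Qed.

Lemma l1normN v : l1norm (- v) = l1norm v.
Proof. by apply: eq_bigr => i _; rewrite mxE normrN. Qed.

Lemma l1normZ a v : l1norm (a *: v) = `|a| * l1norm v.
Proof. by rewrite /l1norm mulr_sumr; apply: eq_bigr => i _; rewrite mxE normrM. Qed.

Lemma l1normB u v : l1norm (u - v) <= l1norm u + l1norm v.
Proof. by rewrite -(l1normN v) l1normD. Qed.

Lemma ler_norm_l1norm v i : `|v i 0| <= l1norm v.
Proof. by rewrite /l1norm (bigD1 i) //= lerDl sumr_ge0. Qed.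

Lemma colsum_le_opnorm1 A j : \sum_i `|A i j| <= opnorm1 A.
Proof. exact: Order.TotalTheory.le_bigmax. Qed.

Lemma l1norm_mulmx A v : l1norm (A *m v) <= opnorm1 A * l1norm v.
Proof.
rewrite /l1norm mulr_sumr.
apply: (@le_trans _ _ (\sum_i \sum_k `|A i k| * `|v k 0|)).
  apply: ler_sum => i _; rewrite mxE (le_trans (ler_norm_sum _ _ _)) //.
  by apply: ler_sum => k _; rewrite normrM.
rewrite exchange_big /=; apply: ler_sum => k _.
by rewrite -mulr_suml ler_wpM2r // colsum_le_opnorm1.
Qed.

End L1norm.

Section Conjugation.
Variables (R : realType) (N : nat) (m : 'I_N.+1 -> R).
Local Notation C := (Cmat R N).
Local Notation D := (Dmat R N).
Local Notation l1 := (@l1norm R N.+1).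
Local Notation nM := (opnorm1 (Mdiag m)).
Implicit Types (v w y r : 'cV[R]_N.+1).

Lemma opnorm1_Cmat : opnorm1 C <= 2 ^+ N.
Proof.
apply: bigmax_le => [|k _]; first exact: exprn_ge0.
under eq_bigr do rewrite Cmat_kraw.
by apply: coef_l1_kraw; rewrite -ltnS.
Qed.

Lemma l1norm_invCmat v : l1 (invmx C *m v) <= l1 v.
Proof.
rewrite invmx_Cmat -scalemxAl l1normZ ger0_norm ?invr_ge0 ?exprn_ge0 //.
rewrite ler_pdivrMl ?exprn_gt0 // (le_trans (l1norm_mulmx _ _)) //.
by rewrite ler_wpM2r ?l1norm_ge0 ?opnorm1_Cmat.
Qed.

Lemma ler_norm_opnorm1_Mdiag i : `|m i| <= nM.
Proof.
apply: le_trans (colsum_le_opnorm1 _ i).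
by rewrite (bigD1 i) //= !mxE eqxx mulr1n lerDl sumr_ge0.
Qed.

Lemma opnorm1_Mdiag_ge0 : 0 <= nM.
Proof. exact: le_trans (normr_ge0 _) (ler_norm_opnorm1_Mdiag ord0). Qed.

Definition gap (mu : R) := 2 * mu - (2 ^+ N.+1 + 1) * nM.
Definition dbound (mu : R) := (2 * N)%:R / gap mu.

Lemma gt0_of_gap_gt0 mu : 0 < gap mu -> 0 < mu.
Proof.
rewrite /gap subr_gt0 => lt.
have : 0 <= (2 ^+ N.+1 + 1) * nM by rewrite mulr_ge0 ?opnorm1_Mdiag_ge0 ?addr_ge0 ?exprn_ge0.
lra.
Qed.

Lemma dbound_ge0 mu : 0 < gap mu -> 0 <= dbound mu.
Proof. by move=> gap_gt0; rewrite divr_ge0 // ltW. Qed.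

Lemma l1norm_Dmat v : l1 (D *m v) <= (2 * N)%:R * l1 v.
Proof.
rewrite /l1norm mulr_sumr; apply: ler_sum => i _.
rewrite mul_diag_mx !mxE normrM normrN (ger0_norm (ler0n _ _)) ler_wpM2r // ler_nat.
by rewrite leq_mul2l -ltnS ltn_ord orbT.
Qed.

Lemma l1norm_Dmat_ge v : v ord0 0 = 0 -> 2 * l1 v <= l1 (D *m v).
Proof.
move=> v0; rewrite /l1norm mulr_sumr; apply: ler_sum => i _.
rewrite mul_diag_mx !mxE normrM normrN (ger0_norm (ler0n _ _)).
have [->|ne_i0] := eqVneq i ord0; first by rewrite v0 normr0 !mulr0.
rewrite ler_wpM2r // natrM ler_peMr // ler1n lt0n.
by apply: contra ne_i0 => /eqP i0; apply/eqP/val_inj.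
Qed.

Lemma Dmat_xhat : D *m xhat R N = 0.
Proof.
apply/matrixP => i j; rewrite mul_diag_mx !mxE.
by case: eqP => [->|_]; rewrite ?muln0 ?oppr0 ?mul0r ?mulr0.
Qed.

Definition wmean v := \sum_i m i * v i 0.

Lemma wmeanB u v : wmean (u - v) = wmean u - wmean v.
Proof. by rewrite /wmean -sumrB; apply: eq_bigr => i _; rewrite !mxE mulrBr. Qed.

Lemma wmeanZ a v : wmean (a *: v) = a * wmean v.
Proof. by rewrite /wmean mulr_sumr; apply: eq_bigr => i _; rewrite mxE mulrCA. Qed.

Lemma ler_norm_wmean v : `|wmean v| <= nM * l1 v.
Proof.
apply: le_trans (l1norm_mulmx _ _); rewrite (le_trans (ler_norm_sum _ _ _)) //.
by apply: ler_sum => i _; rewrite mul_diag_mx !mxE.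
Qed.

Definition Mconj := invmx C *m Mdiag m *m C.

Lemma l1norm_Mconj v : l1 (Mconj *m v) <= nM * (2 ^+ N * l1 v).
Proof.
rewrite -!mulmxA (le_trans (l1norm_invCmat _)) // (le_trans (l1norm_mulmx _ _)) //.
rewrite ler_wpM2l ?opnorm1_Mdiag_ge0 //.
by rewrite (le_trans (l1norm_mulmx _ _)) // ler_wpM2r ?l1norm_ge0 ?opnorm1_Cmat.
Qed.

(* On vectors with [w_0 = 0], [D] expands the norm by at least [2], while every
   other term on the right is [O(nM)]. *)
Lemma linearized_l1_bound mu y w r a : 0 <= mu -> w ord0 0 = 0 ->
  l1 y <= 1 -> `|a| <= nM ->
  mu *: (D *m w) = r + a *: w + wmean (C *m w) *: y - Mconj *m w ->
  gap mu * l1 w <= l1 r.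
Proof.
move=> mu_ge0 w0 y_le1 a_le w_eq; have nM_ge0 := opnorm1_Mdiag_ge0.
have low : 2 * mu * l1 w <= l1 (mu *: (D *m w)).
  by rewrite l1normZ ger0_norm // (mulrC 2) -mulrA ler_wpM2l // l1norm_Dmat_ge.
have s_le : `|wmean (C *m w)| <= nM * (2 ^+ N * l1 w).
  rewrite (le_trans (ler_norm_wmean _)) // ler_wpM2l //.
  by rewrite (le_trans (l1norm_mulmx _ _)) // ler_wpM2r ?l1norm_ge0 ?opnorm1_Cmat.
have sy_le : l1 (wmean (C *m w) *: y) <= nM * (2 ^+ N * l1 w).
  by rewrite l1normZ (le_trans _ s_le) // ler_piMr.
have aw_le : l1 (a *: w) <= nM * l1 w by rewrite l1normZ ler_wpM2r ?l1norm_ge0.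
have G_le := l1norm_Mconj w.
have up := le_trans (l1normB _ _) (lerD (le_trans (l1normD _ _)
  (lerD (le_trans (l1normD _ _) (lerD (lexx (l1 r)) aw_le)) sy_le)) G_le).
rewrite -w_eq in up; have := le_trans low up.
have := l1norm_ge0 w; rewrite /gap exprS; nra.
Qed.

End Conjugation.

Import numFieldNormedType.Exports.
Local Open Scope classical_set_scope.

Section Limits.
Variable R : realType.

Lemma cvg_dnbhs0_of_increment_bound (f : R -> R) (c d : R) : 0 <= c -> 0 < d ->
  (forall h h', h != 0 -> h' != 0 -> `|h| < d -> `|h'| < d ->
     `|f h - f h'| <= c * (`|h| + `|h'|)) ->
  cvg (f @ 0^').
Proof.
move=> c_ge0 d_gt0 f_incr; apply/cauchy_cvgP; apply: cauchy_exP => e e_gt0.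
pose r := Num.min d (e / (2 * c + 1)).
have c1_gt0 : 0 < 2 * c + 1 by rewrite ltr_wpDl // mulr_ge0.
have r_gt0 : 0 < r by rewrite lt_min d_gt0 divr_gt0.
have r_le_d : r <= d by rewrite ge_min lexx.
have r_le_e : r * (2 * c + 1) <= e by rewrite -ler_pdivlMr // ge_min lexx orbT.
have near_neq0 : \forall h \near (0 : R)^', h != 0 := nbhs_dnbhs_neq 0.
have near_lt : \forall h \near (0 : R)^', `|h| < r := dnbhs0_lt r_gt0.
exists (f (r / 2)); apply: filterS (filterI near_neq0 near_lt) => h [h_neq0 h_lt].
have r2_gt0 : 0 < r / 2 by rewrite divr_gt0.
have r2_lt : `|r / 2| < d by rewrite gtr0_norm //; lra.
have := f_incr _ _ (lt0r_neq0 r2_gt0) h_neq0 r2_lt (lt_le_trans h_lt r_le_d).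
rewrite (gtr0_norm r2_gt0) /ball /= => bound.
apply: le_lt_trans bound _; nra.
Qed.

Lemma ler_sum_norm_lim (T : Type) (F : set_system T) (FF : ProperFilter F)
    (I : finType) (f : I -> T -> R) (B : R) :
  (forall i, cvg (f i @ F)) -> (\forall t \near F, \sum_i `|f i t| <= B) ->
  \sum_i `|lim (f i @ F)| <= B.
Proof.
move=> f_cvg f_bound.
have sum_cvg : (fun t => \sum_i `|f i t|) @ F --> \sum_i `|lim (f i @ F)|.
  by apply: (cvg_big add_continuous) => i _; apply: cvg_norm; exact: f_cvg.
by rewrite -(cvg_lim _ sum_cvg) //; apply: limr_le => //; exact: cvgP sum_cvg.
Qed.

Lemma cvg_pinfty_of_le_div (f : R -> R) (l a b k : R) : 0 < k ->
  (forall t, b < k * t -> `|f t - l| <= a / (k * t - b)) -> f @ +oo --> l.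
Proof.
move=> k_gt0 f_le; apply/cvgrPdist_lt => e e_gt0.
apply: filterS (nbhs_pinfty_gt (num_real ((b + `|a| / e) / k))) => t t_big.
have kt_big : b + `|a| / e < k * t by rewrite [k * t]mulrC -ltr_pdivrMr.
have kt_gt : `|a| < e * (k * t - b) by rewrite [e * _]mulrC -ltr_pdivrMr //; lra.
have ktb_gt0 : 0 < k * t - b by have := divr_ge0 (normr_ge0 a) (ltW e_gt0); lra.
have b_lt : b < k * t by rewrite -subr_gt0.
rewrite distrC (le_lt_trans (f_le _ b_lt)) // ltr_pdivrMr //.
by rewrite (le_lt_trans (ler_norm a)) // mulrC.
Qed.

End Limits.

Section Solution.
Variables (R : realType) (N : nat) (m : 'I_N.+1 -> R) (p : R -> 'cV[R]_N.+1).
Hypothesis p_pos : forall mu : R, 0 < mu -> forall i, 0 < p mu i 0.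
Hypothesis p_sum : forall mu : R, 0 < mu -> \sum_i p mu i 0 = 1.
Hypothesis p_eig : forall mu : R, 0 < mu ->
  (Mdiag m + mu *: Qmat R N) *m p mu = (\sum_i m i * p mu i 0) *: p mu.

Local Notation C := (Cmat R N).
Local Notation D := (Dmat R N).
Local Notation l1 := (@l1norm R N.+1).
Local Notation nM := (opnorm1 (Mdiag m)).
Local Notation wmean := (wmean m).
Local Notation gap := (gap m).
Local Notation dbound := (dbound m).
Local Notation x mu := (invmx C *m p mu).

Lemma Cmat_x mu : C *m x mu = p mu.
Proof. by rewrite mulmxA mulmxV ?Cmat_unit ?mul1mx. Qed.

Lemma l1norm_p mu : 0 < mu -> l1 (p mu) = 1.
Proof.
by move=> mu_gt0; rewrite -(p_sum mu_gt0); apply: eq_bigr => i _; rewrite gtr0_norm ?p_pos.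
Qed.

Lemma l1norm_x mu : 0 < mu -> l1 (x mu) <= 1.
Proof. by move=> mu_gt0; rewrite -(l1norm_p mu_gt0) l1norm_invCmat. Qed.

Lemma ler_norm_wmean_p mu : 0 < mu -> `|wmean (p mu)| <= nM.
Proof. by move=> mu_gt0; rewrite (le_trans (ler_norm_wmean _ _)) ?l1norm_p ?mulr1. Qed.

(* The first row of [C] is all ones. *)
Lemma x_ord0 mu : 0 < mu -> x mu ord0 0 = 2 ^- N.
Proof.
move=> mu_gt0; rewrite invmx_Cmat -scalemxAl !mxE -[RHS]mulr1 -(p_sum mu_gt0).
by congr (_ * _); apply: eq_bigr => k _; rewrite Cmat_kraw kraw_coef0 mul1r.
Qed.

Lemma Dmat_x mu : 0 < mu -> mu *: (D *m x mu) = wmean (p mu) *: x mu - Mconj m *m x mu.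
Proof.
move=> mu_gt0; have E := congr1 (mulmx (invmx C)) (p_eig mu_gt0).
rewrite mulmxDl mulmxDr -scalemxAl -!scalemxAr in E.
have Qx : invmx C *m (Qmat R N *m p mu) = D *m x mu.
  rewrite -{1}Cmat_x (mulmxA (Qmat R N)) Qmat_Cmat !mulmxA.
  by rewrite mulVmx ?Cmat_unit // mul1mx.
have Mx : invmx C *m (Mdiag m *m p mu) = Mconj m *m x mu.
  by rewrite /Mconj -!mulmxA Cmat_x.
by rewrite Qx Mx in E; rewrite -E [_ + mu *: _]addrC addrK.
Qed.

Lemma l1norm_x_sub_xhat mu : 0 < mu -> l1 (x mu - xhat R N) <= nM / mu.
Proof.
move=> mu_gt0.
have w0 : (x mu - xhat R N) ord0 0 = 0.
  by have := x_ord0 mu_gt0; move: (x mu) => X X0; rewrite !mxE X0 /= subrr.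
have low := l1norm_Dmat_ge w0.
rewrite mulmxBr Dmat_xhat subr0 in low.
have up : l1 (mu *: (D *m x mu)) <= 2 * nM.
  rewrite Dmat_x // /Mconj -!mulmxA Cmat_x scalemxAr -mulmxBr.
  apply: le_trans (l1norm_invCmat _) _.
  apply: (@le_trans _ _ (\sum_i 2 * nM * p mu i 0)); last first.
    by rewrite -mulr_sumr p_sum ?mulr1.
  apply: ler_sum => i _; have p_ge0 := ltW (p_pos mu_gt0 i).
  rewrite mul_diag_mx !mxE -mulrBl normrM (ger0_norm p_ge0) ler_wpM2r //.
  rewrite (le_trans (ler_normB _ _)) // mulr2n mulrDl mul1r.
  by rewrite lerD ?ler_norm_wmean_p ?ler_norm_opnorm1_Mdiag.
rewrite l1normZ gtr0_norm // in up.
rewrite ler_pdivlMr //; have := l1norm_ge0 (x mu - xhat R N); nra.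
Qed.

Lemma x_increment mu nu : 0 < mu -> 0 < nu ->
  mu *: (D *m (x nu - x mu)) =
    - (nu - mu) *: (D *m x nu) + wmean (p mu) *: (x nu - x mu)
    + wmean (C *m (x nu - x mu)) *: x nu - Mconj m *m (x nu - x mu).
Proof.
move=> mu_gt0 nu_gt0; have eq_mu := Dmat_x mu_gt0; have eq_nu := Dmat_x nu_gt0.
rewrite !mulmxBr !Cmat_x wmeanB scalerBr eq_mu.
have -> : mu *: (D *m x nu) = wmean (p nu) *: x nu - Mconj m *m x nu - (nu - mu) *: (D *m x nu).
  by rewrite -eq_nu scalerBl opprB addrC subrK.
move: (x nu) (x mu) (wmean (p nu)) (wmean (p mu)) (Mconj m *m x nu) (Mconj m *m x mu).
move=> X Y a b GX GY; move: (nu - mu) (D *m X) => h DX.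
by apply/matrixP => i j; rewrite !mxE; ring.
Qed.

Lemma x_sub_ord0 mu nu : 0 < mu -> 0 < nu -> (x nu - x mu) ord0 0 = 0.
Proof.
move=> mu_gt0 nu_gt0; have := x_ord0 mu_gt0; have := x_ord0 nu_gt0.
by move: (x nu) (x mu) => X Y X0 Y0; rewrite !mxE X0 Y0 subrr.
Qed.

Lemma x_lipschitz mu nu : 0 < gap mu -> 0 < nu ->
  l1 (x nu - x mu) <= dbound mu * `|nu - mu|.
Proof.
move=> gap_gt0 nu_gt0; have mu_gt0 := gt0_of_gap_gt0 gap_gt0.
have := linearized_l1_bound (ltW mu_gt0) (x_sub_ord0 mu_gt0 nu_gt0)
  (l1norm_x nu_gt0) (ler_norm_wmean_p mu_gt0) (x_increment mu_gt0 nu_gt0).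
rewrite l1normZ normrN => le_gap.
rewrite /dbound mulrAC ler_pdivlMr // mulrC (le_trans le_gap) // mulrC ler_wpM2r //.
by rewrite (le_trans (l1norm_Dmat _)) // ler_piMr // l1norm_x.
Qed.

Definition dquot (mu h : R) := h^-1 *: (x (h + mu) - x mu).

Lemma l1norm_dquot mu h : 0 < gap mu -> 0 < h + mu -> l1 (dquot mu h) <= dbound mu.
Proof.
move=> gap_gt0 hmu_gt0; rewrite l1normZ.
have [->|h_neq0] := eqVneq h 0; first by rewrite invr0 normr0 mul0r dbound_ge0.
rewrite (le_trans (ler_wpM2l _ (x_lipschitz gap_gt0 hmu_gt0))) // addrK.
by rewrite normfV mulrCA mulVf ?normr_eq0 ?mulr1.
Qed.

Lemma Dmat_dquot mu h : 0 < mu -> 0 < h + mu -> h != 0 ->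
  mu *: (D *m dquot mu h) = - (D *m x (h + mu)) + wmean (p mu) *: dquot mu h
    + wmean (C *m dquot mu h) *: x (h + mu) - Mconj m *m dquot mu h.
Proof.
move=> mu_gt0 hmu_gt0 h_neq0; rewrite /dquot -!scalemxAr scalerA mulrC -scalerA.
rewrite x_increment // addrK wmeanZ.
move: (wmean (C *m _)) (Mconj m *m _) (D *m x (h + mu)) (wmean (p mu)) => s G DX a.
move: (x (h + mu) - x mu) (x (h + mu)) => d X.
by apply/matrixP => i j; rewrite !mxE; field.
Qed.

Lemma l1norm_dquot_sub mu h h' : 0 < gap mu -> 0 < h + mu -> 0 < h' + mu ->
  h != 0 -> h' != 0 ->
  gap mu * l1 (dquot mu h - dquot mu h')
    <= ((2 * N)%:R + nM * (2 ^+ N * dbound mu)) * (dbound mu * (`|h| + `|h'|)).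
Proof.
move=> gap_gt0 hmu_gt0 hmu'_gt0 h_neq0 h'_neq0; have mu_gt0 := gt0_of_gap_gt0 gap_gt0.
set q := dquot mu h; set q' := dquot mu h'.
set X := x (h + mu); set X' := x (h' + mu).
have eq_sub : mu *: (D *m (q - q')) =
    (- (D *m (X - X')) + wmean (C *m q') *: (X - X')) + wmean (p mu) *: (q - q')
    + wmean (C *m (q - q')) *: X - Mconj m *m (q - q').
  rewrite !mulmxBr !scalerBr !Dmat_dquot // wmeanB.
  move: (D *m X) (D *m X') (wmean (C *m q)) (wmean (C *m q')) (Mconj m *m q) (Mconj m *m q').
  move=> DX DX' s s' G G'; move: (wmean (p mu)) => a.
  by apply/matrixP => i j; rewrite !mxE; ring.
have q0 : (q - q') ord0 0 = 0.
  rewrite /q /q' /dquot; have := x_sub_ord0 mu_gt0 hmu_gt0; have := x_sub_ord0 mu_gt0 hmu'_gt0.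
  by move: (x (h + mu) - x mu) (x (h' + mu) - x mu) => Y Y' Y0' Y0; rewrite !mxE Y0 Y0' !mulr0 subrr.
apply: le_trans (linearized_l1_bound (ltW mu_gt0) q0 (l1norm_x hmu_gt0)
  (ler_norm_wmean_p mu_gt0) eq_sub) _.
have XX' : l1 (X - X') <= dbound mu * (`|h| + `|h'|).
  have -> : X - X' = (X - x mu) - (X' - x mu) by rewrite opprB addrA subrK.
  rewrite (le_trans (l1normB _ _)) // mulrDr.
  by rewrite /X /X' lerD // (le_trans (x_lipschitz gap_gt0 _)) ?addrK.
rewrite (le_trans (l1normD _ _)) // l1normN l1normZ mulrDl.
rewrite (le_trans (lerD (l1norm_Dmat _) (lexx _))) //.
have nM_ge0 := opnorm1_Mdiag_ge0 m.
have s'_le : `|wmean (C *m q')| <= nM * (2 ^+ N * dbound mu).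
  rewrite (le_trans (ler_norm_wmean _ _)) // ler_wpM2l //.
  rewrite (le_trans (l1norm_mulmx _ _)) // (le_trans (ler_wpM2r (l1norm_ge0 _) (opnorm1_Cmat _ _))) //.
  by rewrite ler_wpM2l ?exprn_ge0 // l1norm_dquot.
have XX'_ge0 := l1norm_ge0 (X - X').
apply: lerD; first exact: ler_wpM2l.
apply: le_trans (ler_wpM2r XX'_ge0 s'_le) _; apply: ler_wpM2l => //.
by rewrite mulr_ge0 // mulr_ge0 ?exprn_ge0 // dbound_ge0.
Qed.




Lemma dquot_coord mu h i : dquot mu h i 0 = h^-1 * (x (h + mu) i 0 - x mu i 0).
Proof. by rewrite /dquot; move: (x (h + mu)) (x mu) => X Y; rewrite !mxE. Qed.

Lemma cvg_dquot_coord mu i : 0 < gap mu -> cvg ((fun h => dquot mu h i 0) @ 0^').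
Proof.
move=> gap_gt0; have mu_gt0 := gt0_of_gap_gt0 gap_gt0.
have db_ge0 := dbound_ge0 gap_gt0.
have nM_ge0 := opnorm1_Mdiag_ge0 m.
apply: (@cvg_dnbhs0_of_increment_bound _ _
  (((2 * N)%:R + nM * (2 ^+ N * dbound mu)) * dbound mu / gap mu) mu) => //.
  apply: divr_ge0; last exact: ltW.
  by rewrite mulr_ge0 // addr_ge0 // mulr_ge0 // mulr_ge0 // exprn_ge0.
move=> h h' h_neq0 h'_neq0 h_lt h'_lt.
have pos (t : R) : `|t| < mu -> 0 < t + mu by move=> t_lt; have := ler_norm (- t); rewrite normrN; lra.
have le_sub := l1norm_dquot_sub gap_gt0 (pos _ h_lt) (pos _ h'_lt) h_neq0 h'_neq0.
have -> : dquot mu h i 0 - dquot mu h' i 0 = (dquot mu h - dquot mu h') i 0 by rewrite !mxE.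
apply: le_trans (ler_norm_l1norm _ i) _.
by rewrite mulrAC ler_pdivlMr // mulrC -mulrA.
Qed.

Lemma derivable_x mu i : 0 < gap mu -> derivable (fun t => x t i 0) mu 1.
Proof.
move=> gap_gt0; rewrite /derivable.
rewrite (@eq_is_cvg _ _ _ _ (fun h => dquot mu h i 0)); first exact: cvg_dquot_coord.
by move=> h /=; rewrite dquot_coord [h%:A]mulr1.
Qed.

Lemma derive1_x mu i :
  derive1 (fun t => x t i 0) mu = lim ((fun h => dquot mu h i 0) @ 0^').
Proof. by rewrite /derive1; f_equal; f_equal; apply: funext => h; rewrite dquot_coord. Qed.

Lemma sum_norm_derive1_x mu : 0 < gap mu ->
  \sum_i `|derive1 (fun t => x t i 0) mu| <= dbound mu.
Proof.
move=> gap_gt0; have mu_gt0 := gt0_of_gap_gt0 gap_gt0.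
under eq_bigr do rewrite derive1_x.
apply: ler_sum_norm_lim => [i|]; first exact: cvg_dquot_coord.
apply: filterS (dnbhs0_lt mu_gt0) => h h_lt.
have hmu_gt0 : 0 < h + mu by have := ler_norm (- h); rewrite normrN; lra.
exact: l1norm_dquot gap_gt0 hmu_gt0.
Qed.

End Solution.

Theorem theorem1 (R : realType) (N : nat) (hN : (1 <= N)%N)
  (m : 'I_N.+1 -> R) (p : R -> 'cV[R]_(N.+1))
  (hp_pos : forall mu : R, 0 < mu -> forall i, 0 < p mu i 0)
  (hp_sum : forall mu : R, 0 < mu -> \sum_i p mu i 0 = 1)
  (hp_eig : forall mu : R, 0 < mu ->
     (Mdiag m + mu *: Qmat R N) *m p mu = (\sum_i m i * p mu i 0) *: p mu) :
  let x := fun mu : R => invmx (Cmat R N) *m p mu in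
  let nM := opnorm1 (Mdiag m) in
  (forall mu : R, 0 < mu -> l1norm (x mu - xhat R N) <= nM / mu) /\
  (forall mu : R, (2%:R ^+ N.+1 + 1) * nM < 2%:R * mu ->
     (forall i, derivable (fun t : R => x t i 0) mu 1) /\
     \sum_i `|derive1 (fun t : R => x t i 0) mu|
       <= (2 * N)%:R / (2%:R * mu - (2%:R ^+ N.+1 + 1) * nM)) /\
  (forall i, (fun t : R => x t i 0) @ +oo --> xhat R N i 0) /\
  (forall i, (fun t : R => derive1 (fun s : R => x s i 0) t) @ +oo --> (0 : R)).
Proof.
move=> x nM.
have xhat_bound := l1norm_x_sub_xhat hp_pos hp_sum hp_eig.
have deriv_bound := sum_norm_derive1_x hp_pos hp_sum hp_eig.
split; [exact: xhat_bound | split; [|split]].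
- move=> mu lt_mu; have gap_gt0 : 0 < gap m mu by rewrite subr_gt0.
  by split=> [i|]; [exact: (derivable_x hp_pos hp_sum hp_eig) | exact: deriv_bound].
- move=> i; apply: (@cvg_pinfty_of_le_div _ _ _ nM 0 1) => // t; rewrite mul1r subr0 => t_gt0.
  rewrite (le_trans _ (xhat_bound _ t_gt0)) // -[x t i 0 - _]/(_ - xhat R N i 0).
  by rewrite (le_trans _ (ler_norm_l1norm _ i)) // !mxE.
- move=> i; apply: (@cvg_pinfty_of_le_div _ _ _ (2 * N)%:R ((2 ^+ N.+1 + 1) * nM) 2) => // t.
  rewrite -subr_gt0 subr0 => gap_gt0; rewrite (le_trans _ (deriv_bound _ gap_gt0)) //.
  by rewrite (bigD1 i) //= lerDl sumr_ge0.
Qed.
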